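(* Let $S_0,S_1,\ldots,S_m,F$ be propositional formulae. If $[S_1,\ldots,S_m,F] \equiv [S_1,\ldots,S_m]$, then $[S_0,S_1,\ldots,S_m,F] \equiv [S_0,S_1,\ldots,S_m]$.
   Context: Models are truth assignments. For a formula $G$: $I \leq_G J$ iff $I \models G$ or $J \not\models G$. For a sequence $S=[S_1,\ldots,S_m]$: $I \leq_S J$ iff either $S=[]$, or ($I \leq_{S_1} J$ and (either $J \not\leq_{S_1} I$ or $I \leq_R J$)), where $R=[S_2,\ldots,S_m]$. For sequences, $S\equiv R$ means $I \leq_S J$ and $I\leq_R J$ coincide for all pairs of models $I,J$. *)

From Stdlib Require Import List Bool.
Import ListNotations.

Inductive form : Type :=
| FVar : nat -> form
| FTrue : form
| FFalse : form
| FNot : form -> form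
| FAnd : form -> form -> form
| FOr : form -> form -> form
| FImp : form -> form -> form.

Definition model := nat -> bool.

Fixpoint sat (I : model) (G : form) : Prop :=
  match G with
  | FVar v => I v = true
  | FTrue => True
  | FFalse => False
  | FNot A => ~ sat I A
  | FAnd A B => sat I A /\ sat I B
  | FOr A B => sat I A \/ sat I B
  | FImp A B => sat I A -> sat I B
  end.

Definition le_form (G : form) (I J : model) : Prop := sat I G \/ ~ sat J G.

Fixpoint le_seq (S : list form) (I J : model) : Prop :=
  match S with
  | [] => True
  | S1 :: R => le_form S1 I J /\ (~ le_form S1 J I \/ le_seq R I J)
  end.

Definition seq_equiv (S R : list form) : Prop :=
  forall I J : model, le_seq S I J <-> le_seq R I J.

From Stdlib Require Import List.
Import ListNotations.

Lemma seq_equiv_cons (G : form) (R R' : list form) :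
  seq_equiv R R' -> seq_equiv (G :: R) (G :: R').
Proof.
  intros equiv_RR' I J; simpl.
  specialize (equiv_RR' I J).
  tauto.
Qed.

Theorem theorem6 (S0 : form) (S : list form) (F : form) :
  seq_equiv (S ++ [F]) S ->
  seq_equiv (S0 :: S ++ [F]) (S0 :: S).
Proof.
  apply seq_equiv_cons.
Qed.
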